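(* Let $m,n$ be positive integers. Then $\mathrm{RR}(\mathcal{B}_m:\mathcal{B}_n)\leq m\,\mathrm{R}_{2^m-1}(\mathcal{B}_n)+m$.
   Context: $\mathcal{B}_N$ denotes the Boolean lattice of all subsets of $[N]$ ordered by inclusion. An induced copy of a poset $\mathcal{P}$ in a poset $\mathcal{Q}$ is the image of an injection $f:\mathcal{P}\to\mathcal{Q}$ with $f(X)\le f(Y)$ iff $X\le Y$. A colored family is monochromatic if all its sets share a color, rainbow if all its sets have pairwise distinct colors. $\mathrm{R}_k(\mathcal{P})$ is the smallest $n$ such that every coloring of $\mathcal{B}_n$ with $k$ colors contains a monochromatic induced copy of $\mathcal{P}$. The Boolean rainbow Ramsey number $\mathrm{RR}(\mathcal{Q}:\mathcal{P})$ is the smallest $n$ such that every coloring (with any number of colors) of the sets of $\mathcal{B}_n$ contains a rainbow induced copy of $\mathcal{Q}$ or a monochromatic induced copy of $\mathcal{P}$. *)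

From mathcomp Require Import all_boot.
Set Implicit Arguments. Unset Strict Implicit. Unset Printing Implicit Defensive.

(* The Boolean lattice B_N is {set 'I_N} ordered by \subset. *)

Definition induced_copy (m N : nat) (f : {set 'I_m} -> {set 'I_N}) : Prop :=
  injective f /\ forall X Y : {set 'I_m}, (f X \subset f Y) = (X \subset Y).

Definition mono_copy (C : Type) (n N : nat) (c : {set 'I_N} -> C) : Prop :=
  exists f : {set 'I_n} -> {set 'I_N},
    induced_copy f /\ forall X Y : {set 'I_n}, c (f X) = c (f Y).

Definition rainbow_copy (C : Type) (m N : nat) (c : {set 'I_N} -> C) : Prop :=
  exists f : {set 'I_m} -> {set 'I_N},
    induced_copy f /\ injective (fun X => c (f X)).

Definition ramsey_prop (k n N : nat) : Prop :=
  forall c : {set 'I_N} -> 'I_k, @mono_copy _ n N c.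

Definition rainbow_ramsey_prop (m n N : nat) : Prop :=
  forall (C : Type) (c : {set 'I_N} -> C), @rainbow_copy C m N c \/ @mono_copy C n N c.

Definition is_least (P : nat -> Prop) (N : nat) : Prop :=
  P N /\ forall N', P N' -> N <= N'.

(* Split the N = m * R + m points into m blocks of size R followed by m
   extra points, and let [stack I S] be the first |I| blocks, a copy of S in
   block |I|, and I on the extra points.  For I <> [m], S |-> stack I S is an
   induced copy of B_R, and for every choice of sel, I |-> stack I (sel I) is
   an induced copy of B_m.  Choose sel greedily, one set I at a time: if every
   S gave stack I S a colour already used by one of the fewer than 2^m sets
   handled before, these colours would form a (2^m - 1)-colouring of B_R, and
   its monochromatic B_n would lift to one in B_N.  So either there is a
   monochromatic B_n, or the greedy choice succeeds and yields a rainbow B_m. *)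

From mathcomp Require Import all_boot zify.
From Stdlib Require Import Classical.
Set Implicit Arguments. Unset Strict Implicit. Unset Printing Implicit Defensive.

Lemma order_embedding_induced_copy m N (f : {set 'I_m} -> {set 'I_N}) :
  (forall X Y, (f X \subset f Y) = (X \subset Y)) -> induced_copy f.
Proof.
move=> fS; split=> // X Y eXY.
by apply/eqP; rewrite eqEsubset -!fS eXY subxx.
Qed.

Lemma induced_copy_comp a b d (f : {set 'I_a} -> {set 'I_b})
    (g : {set 'I_b} -> {set 'I_d}) :
  induced_copy f -> induced_copy g -> induced_copy (fun X => g (f X)).
Proof.
move=> [f_inj fS] [g_inj gS]; split=> [X Y /g_inj/f_inj //|X Y].
by rewrite gS fS.
Qed.

Section JoinSet.

Variables p q : nat.

Definition join_set (A : {set 'I_p}) (B : {set 'I_q}) : {set 'I_(p + q)} :=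
  [set i | match split i with inl j => j \in A | inr k => k \in B end].

Lemma join_subset A A' B B' :
  (join_set A B \subset join_set A' B') = (A \subset A') && (B \subset B').
Proof.
apply/subsetP/andP => [sub | [/subsetP sAA' /subsetP sBB']].
  split; apply/subsetP.
  - by move=> j; have := sub (unsplit (inl j)); rewrite !inE unsplitK.
  - by move=> k; have := sub (unsplit (inr k)); rewrite !inE unsplitK.
by move=> i; rewrite !inE; case: (split i) => [j /sAA' | k /sBB'].
Qed.

End JoinSet.

Section Stack.

Variables m R : nat.

(* The subtraction truncates only when k < t * R, where the first disjunct
   already holds. *)
Definition prefix_blocks (t : nat) (S : {set 'I_R}) : {set 'I_(m * R)} :=
  [set k : 'I_(m * R) |
    (k < t * R) || (k - t * R \in [seq val j | j <- enum S])].

Lemma prefix_blocksS t (S S' : {set 'I_R}) :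
  S \subset S' -> prefix_blocks t S \subset prefix_blocks t S'.
Proof.
move=> /subsetP sSS'; apply/subsetP => k; rewrite !inE.
case/orP => [-> // | /mapP [j jS ->]].
by rewrite map_f ?orbT // mem_enum sSS' // -mem_enum.
Qed.

Lemma prefix_blocks_subsetE t (S S' : {set 'I_R}) : t < m ->
  (prefix_blocks t S \subset prefix_blocks t S') = (S \subset S').
Proof.
move=> ltm; apply/idP/idP => [/subsetP sub | /prefix_blocksS //].
apply/subsetP => j jS.
have ltk : t * R + j < m * R by have := ltn_ord j; nia.
have := sub (Ordinal ltk); rewrite !inE /= ltnNge leq_addr addKn /=.
by rewrite !(mem_map val_inj) !mem_enum; apply.
Qed.

Lemma prefix_blocks_lt t t' (S S' : {set 'I_R}) :
  t < t' -> prefix_blocks t S \subset prefix_blocks t' S'.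
Proof.
move=> ltt'; apply/subsetP => k; rewrite !inE.
have le_tt' : t * R + R <= t' * R by nia.
case/orP => [lt_k | /mapP [j _ e]]; apply/orP; left; first by lia.
by move: e (ltn_ord j) => /= e; lia.
Qed.

Definition stack (I : {set 'I_m}) (S : {set 'I_R}) : {set 'I_(m * R + m)} :=
  join_set (prefix_blocks #|I| S) I.

Lemma stack_induced_copy I : I != setT -> induced_copy (stack I).
Proof.
move=> I_neqT; apply: order_embedding_induced_copy => S S'.
have ltm : #|I| < m.
  by rewrite -[X in _ < X]card_ord -cardsT proper_card ?properT.
by rewrite join_subset subxx andbT prefix_blocks_subsetE.
Qed.

Lemma stack_sel_subset (sel : {set 'I_m} -> {set 'I_R}) I J :
  (stack I (sel I) \subset stack J (sel J)) = (I \subset J).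
Proof.
rewrite join_subset; apply/andP/idP => [[] // | sIJ]; split=> //.
have [-> | I_neqJ] := eqVneq I J; first exact: subxx.
by apply: prefix_blocks_lt; rewrite proper_card // properEneq I_neqJ.
Qed.

Lemma stack_sel_induced_copy (sel : {set 'I_m} -> {set 'I_R}) :
  induced_copy (fun I => stack I (sel I)).
Proof. exact/order_embedding_induced_copy/stack_sel_subset. Qed.

End Stack.

Lemma mono_copy_comp (C : Type) n R N (e : {set 'I_R} -> {set 'I_N})
    (c : {set 'I_N} -> C) :
  induced_copy e -> mono_copy n (fun S => c (e S)) -> mono_copy n c.
Proof.
move=> e_ind [h [h_ind hc]].
by exists (fun X => e (h X)); split; [exact: induced_copy_comp | exact: hc].
Qed.

Lemma mono_copy_factor (C D : Type) n N (c : {set 'I_N} -> C)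
    (d : {set 'I_N} -> D) (g : D -> C) :
  (forall X, c X = g (d X)) -> mono_copy n d -> mono_copy n c.
Proof.
move=> cE [h [h_ind hd]].
by exists h; split=> // X Y; rewrite !cE (hd X Y).
Qed.

Lemma ramsey_prop_fin_colors k n N (T : finType) (c : {set 'I_N} -> T) :
  ramsey_prop k n N -> #|T| <= k -> mono_copy n c.
Proof.
move=> ramsey le_Tk.
have [h [h_ind hc]] := ramsey (fun X => widen_ord le_Tk (enum_rank (c X))).
exists h; split=> // X Y; apply/enum_rank_inj/val_inj.
exact: (congr1 val (hc X Y)).
Qed.

Lemma injective_in_cons (T : eqType) (U : Type) (f : T -> U) x (s : seq T) :
  {in s &, injective f} -> (forall y, y \in s -> f x <> f y) ->
  {in x :: s &, injective f}.
Proof.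
move=> f_inj fx_new y z; rewrite !in_cons.
case: (eqVneq y x) => [-> | _] /=; case: (eqVneq z x) => [-> | _] //= ys zs.
- by move/fx_new.
- by move/esym/fx_new.
- exact: f_inj.
Qed.

Lemma is_least_exists (P : nat -> Prop) k :
  P k -> exists N, is_least P N /\ N <= k.
Proof.
elim/ltn_ind: k => k IH Pk.
have [[k' [lt_k'k Pk']] | no_smaller] :=
  classic (exists k', k' < k /\ P k').
  have [N [leastN le_Nk']] := IH k' lt_k'k Pk'.
  by exists N; split=> //; apply: leq_trans le_Nk' (ltnW lt_k'k).
exists k; split=> //; split=> // k' Pk'; rewrite leqNgt; apply/negP => lt_k'k.
by apply: no_smaller; exists k'.
Qed.

Section GreedyRainbow.

Variables (m n R : nat) (C : Type) (c : {set 'I_(m * R + m)} -> C).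
Hypothesis ramsey : ramsey_prop (2 ^ m - 1) n R.
Hypothesis no_mono : ~ mono_copy n c.

Lemma stack_fresh_color I (D : seq {set 'I_m}) (g : {set 'I_m} -> C) :
  I != setT -> I \notin D ->
  exists S, forall J, J \in D -> c (stack I S) <> g J.
Proof.
move=> I_neqT I_notin_D; apply: NNPP => no_fresh.
have old_color S : exists J : {J | J \in D}, c (stack I S) = g (val J).
  apply: NNPP => S_fresh; apply: no_fresh; exists S => J JD cJ.
  by apply: S_fresh; exists (exist _ J JD).
have [f fE] := fin_all_exists old_color.
have few_colors : #|{: {J | J \in D}}| <= 2 ^ m - 1.
  have D_sub : [pred J | J \in D] \subset predC1 I.
    apply/subsetP => J; rewrite !inE => JD.
    by apply: contraNneq I_notin_D => <-.
  rewrite card_sig; apply: leq_trans (subset_leq_card D_sub) _.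
  by rewrite cardC1 -cardsT -powersetT card_powerset cardsT card_ord subn1.
apply: no_mono; apply: (mono_copy_comp (@stack_induced_copy m R I I_neqT)).
apply: (mono_copy_factor (g := fun J => g (val J)) fE).
exact: ramsey_prop_fin_colors f ramsey few_colors.
Qed.

(* stack setT S is the full set whatever S is, so setT can never receive a
   fresh colour and is handled first. *)
Lemma greedy_rainbow (s : seq {set 'I_m}) :
  exists sel, {in setT :: s &, injective (fun I => c (stack I (sel I)))}.
Proof.
elim: s => [|I s [sel sel_inj]].
  by exists (fun=> set0) => X Y; rewrite !inE => /eqP-> /eqP->.
have [I_old | I_new] := boolP (I \in setT :: s).
  exists sel; apply: sub_in2 sel_inj => J; rewrite !in_cons.
  by case: (eqVneq J I) => [-> | _]; rewrite ?I_old //= ?orbT.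
have I_neqT : I != setT by apply: contraNneq I_new => ->; rewrite mem_head.
have [S S_fresh] :=
  stack_fresh_color (fun J => c (stack J (sel J))) I_neqT I_new.
pose sel' J := if J == I then S else sel J.
have sel'E J : J \in setT :: s -> sel' J = sel J.
  by rewrite /sel'; case: eqP => // -> /(negP I_new).
exists sel'.
apply: (sub_in2 _ (injective_in_cons (x := I) (s := setT :: s) _ _)).
- by move=> J; rewrite !in_cons orbCA.
- by move=> J K Js Ks; rewrite !sel'E //; apply: sel_inj.
- by move=> J Js; rewrite (sel'E J Js) /sel' eqxx; apply: S_fresh.
Qed.

End GreedyRainbow.

Lemma rainbow_ramsey_prop_of_ramsey m n R :
  ramsey_prop (2 ^ m - 1) n R -> rainbow_ramsey_prop m n (m * R + m).
Proof.
move=> ramsey C c.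
have [mono | no_mono] := classic (mono_copy n c); [by right | left].
have [sel sel_inj] := greedy_rainbow ramsey no_mono (enum {set 'I_m}).
exists (fun I => stack I (sel I)); split; first exact: stack_sel_induced_copy.
by move=> I J; apply: sel_inj; rewrite inE mem_enum orbT.
Qed.

Theorem theorem1p5 (m n : nat) (hm : 0 < m) (hn : 0 < n) (R0 : nat)
  (hR0 : is_least (ramsey_prop (2 ^ m - 1) n) R0) :
  exists N, is_least (rainbow_ramsey_prop m n) N /\ N <= m * R0 + m.
Proof.
have [ramsey _] := hR0.
exact/is_least_exists/rainbow_ramsey_prop_of_ramsey.
Qed.
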